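(* Let $d\ge1$ be an integer, $0<\lambda<1$, and define $v^*_0=1$ and $v^*_k=1-\sqrt[d]{1-\lambda v^*_{k-1}}$ for $k=1,2,\dots$. Then $v^*_k=\Theta((\lambda/d)^k)$ as $k\to\infty$, i.e. there exist constants $0<c\le C<\infty$ such that $c(\lambda/d)^k\le v^*_k\le C(\lambda/d)^k$ for all sufficiently large $k$. *)

From Stdlib Require Import Reals.
Open Scope R_scope.

(* d-th root of a positive real x, as x^(1/d) = exp((1/d) ln x).
   Only applied to arguments in (0,1] (since 0 <= v*_{k-1} <= 1, 0<lambda<1). *)
Definition droot (d : nat) (x : R) : R := Rpower x (/ INR d).

Fixpoint vstar (d : nat) (lam : R) (k : nat) : R :=
  match k with
  | O => 1
  | S k' => 1 - droot d (1 - lam * vstar d lam k')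
  end.

(** Writing [y] for the [d]-th root of [z = 1 - lam v], the elementary bounds
    [d y^d (1 - y) <= 1 - y^d <= d (1 - y)] squeeze one step of the recursion:
    [(lam/d) v <= 1 - y <= (lam/d) v / (1 - lam v)].  The lower bound gives
    [v*_k >= (lam/d)^k] at once.  Since also [v*_k <= lam^k], the factors
    [1/(1 - lam v*_k)] exceed [1] only by [O(lam^k)], so their product over all
    [k] converges and [v*_k <= C (lam/d)^k]. *)

From Stdlib Require Import Reals Lra Lia Psatz.
Open Scope R_scope.

Lemma pow_between_0_1 (y : R) (n : nat) : 0 <= y <= 1 -> 0 <= y ^ n <= 1.
Proof.
  intros Hy; induction n as [|n IH]; simpl; nra.
Qed.

Lemma pow_le_base (y : R) (n : nat) : 0 <= y <= 1 -> (1 <= n)%nat -> y ^ n <= y.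
Proof.
  intros Hy Hn; destruct n as [|n]; [lia|]; simpl.
  pose proof (pow_between_0_1 y n Hy); nra.
Qed.

Lemma one_sub_pow_bounds (y : R) (n : nat) : 0 <= y <= 1 ->
  INR n * y ^ n * (1 - y) <= 1 - y ^ n <= INR n * (1 - y).
Proof.
  intros Hy; induction n as [|n IH]; [simpl; lra|].
  rewrite S_INR; simpl.
  pose proof (pow_between_0_1 y n Hy); pose proof (pos_INR n).
  assert (y * y ^ n <= y ^ n) by nra.
  split; nra.
Qed.

Lemma droot_spec (d : nat) (z : R) : (1 <= d)%nat -> 0 < z ->
  0 < droot d z /\ droot d z ^ d = z.
Proof.
  intros Hd Hz; unfold droot.
  assert (Hpos : 0 < Rpower z (/ INR d)) by apply exp_pos.
  split; [exact Hpos|].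
  rewrite <- Rpower_pow, Rpower_mult, Rinv_l by (auto; apply not_0_INR; lia).
  exact (Rpower_1 z Hz).
Qed.

Lemma droot_le_1 (d : nat) (z : R) : (1 <= d)%nat -> 0 < z <= 1 -> droot d z <= 1.
Proof.
  intros Hd Hz; destruct (droot_spec d z Hd (proj1 Hz)) as [_ Hpow].
  destruct (Rle_or_lt (droot d z) 1) as [Hle|Hgt]; [exact Hle|].
  pose proof (Rlt_pow_R1 _ d Hgt ltac:(lia)); lra.
Qed.

Lemma one_sub_mul_exp_ge_1 (lam x p : R) : 0 <= x <= p -> p <= lam < 1 ->
  1 <= (1 - x) * exp (p / (1 - lam)).
Proof.
  intros Hx Hp.
  set (q := p / (1 - lam)).
  assert (Hq : q * (1 - lam) = p) by (unfold q; field; lra).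
  assert (0 <= q) by (apply Rle_mult_inv_pos; lra).
  pose proof (exp_ineq1_le q).
  (* (1 - x)(1 + q) - 1 >= q - p - p q = q (lam - p) >= 0 *)
  assert (1 <= (1 - x) * (1 + q)) by nra.
  nra.
Qed.

Lemma exp_le_compat (x y : R) : x <= y -> exp x <= exp y.
Proof.
  intros [Hlt|Heq]; [apply Rlt_le, exp_increasing, Hlt | rewrite Heq; apply Rle_refl].
Qed.

Section Recursion.

Variables (d : nat) (lam : R).
Hypothesis Hd : (1 <= d)%nat.
Hypothesis Hlam : 0 < lam < 1.

Let r := lam / INR d.

Lemma lam_div_d_pos : 0 < r.
Proof.
  apply Rdiv_lt_0_compat; [lra|]; apply lt_0_INR; lia.
Qed.

Lemma vstar_step_bounds (v : R) : 0 < v <= 1 ->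
  let w := 1 - droot d (1 - lam * v) in
  r * v <= w /\ w <= lam * v /\ (1 - lam * v) * w <= r * v.
Proof.
  intros Hv w.
  set (z := 1 - lam * v) in w.
  assert (Hz : 0 < z <= 1) by (unfold z; nra).
  destruct (droot_spec d z Hd (proj1 Hz)) as [Hy0 Hpow].
  pose proof (droot_le_1 d z Hd Hz) as Hy1.
  unfold w; set (y := droot d z) in *.
  destruct (one_sub_pow_bounds y d ltac:(lra)) as [Hlo Hhi].
  pose proof (pow_le_base y d ltac:(lra) Hd) as Hyd.
  rewrite Hpow in Hlo, Hhi, Hyd.
  assert (HdR : 1 <= INR d) by (apply (le_INR 1); exact Hd).
  assert (Hr : r * INR d = lam) by (unfold r; field; lra).
  unfold z in *.
  split; [|split].
  - apply (Rmult_le_reg_l (INR d)); nra.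
  - lra.
  - apply (Rmult_le_reg_l (INR d)); nra.
Qed.

Lemma vstar_pos_le_pow (k : nat) : 0 < vstar d lam k <= lam ^ k.
Proof.
  pose proof lam_div_d_pos.
  induction k as [|k IH]; [simpl; lra|].
  pose proof (pow_between_0_1 lam k ltac:(lra)).
  destruct (vstar_step_bounds (vstar d lam k) ltac:(nra)) as [Hlo [Hhi _]].
  simpl; split; nra.
Qed.

Lemma vstar_ge_pow (k : nat) : r ^ k <= vstar d lam k.
Proof.
  pose proof lam_div_d_pos.
  induction k as [|k IH]; [simpl; lra|].
  pose proof (vstar_pos_le_pow k); pose proof (pow_between_0_1 lam k ltac:(lra)).
  destruct (vstar_step_bounds (vstar d lam k) ltac:(nra)) as [Hlo _].
  simpl; nra.
Qed.

Lemma vstar_succ_le (k : nat) :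
  vstar d lam (S k) <= r * vstar d lam k * exp (lam ^ S k / (1 - lam)).
Proof.
  pose proof lam_div_d_pos.
  pose proof (vstar_pos_le_pow k) as Hv.
  pose proof (pow_between_0_1 lam k ltac:(lra)).
  destruct (vstar_step_bounds (vstar d lam k) ltac:(nra)) as [Hlo [_ Hmul]].
  set (v := vstar d lam k) in *.
  assert (Hge : 1 <= (1 - lam * v) * exp (lam ^ S k / (1 - lam))).
  { apply one_sub_mul_exp_ge_1; simpl; nra. }
  pose proof (exp_pos (lam ^ S k / (1 - lam))).
  change (vstar d lam (S k)) with (1 - droot d (1 - lam * v)) in *.
  set (w := 1 - droot d (1 - lam * v)) in *.
  assert (0 <= w) by nra.
  assert (w * 1 <= w * ((1 - lam * v) * exp (lam ^ S k / (1 - lam))))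
    by (apply Rmult_le_compat_l; lra).
  assert ((1 - lam * v) * w * exp (lam ^ S k / (1 - lam))
          <= r * v * exp (lam ^ S k / (1 - lam)))
    by (apply Rmult_le_compat_r; lra).
  nra.
Qed.

(* The exponent is [sum_{j <= k} lam^(j+1) / (1 - lam)] in closed form. *)
Lemma vstar_le_exp_pow (k : nat) :
  vstar d lam k <= exp (lam * (1 - lam ^ k) / (1 - lam) ^ 2) * r ^ k.
Proof.
  pose proof lam_div_d_pos.
  induction k as [|k IH].
  - simpl; replace (lam * (1 - 1) / ((1 - lam) * ((1 - lam) * 1))) with 0
      by (field; lra).
    rewrite exp_0; lra.
  - assert (Hexp : lam * (1 - lam ^ S k) / (1 - lam) ^ 2
                   = lam * (1 - lam ^ k) / (1 - lam) ^ 2 + lam ^ S k / (1 - lam))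
      by (simpl; field; lra).
    rewrite Hexp, exp_plus.
    pose proof (vstar_succ_le k).
    pose proof (exp_pos (lam ^ S k / (1 - lam))).
    assert (r * vstar d lam k * exp (lam ^ S k / (1 - lam))
            <= r * (exp (lam * (1 - lam ^ k) / (1 - lam) ^ 2) * r ^ k)
                 * exp (lam ^ S k / (1 - lam)))
      by (apply Rmult_le_compat_r, Rmult_le_compat_l; lra).
    simpl (r ^ S k); lra.
Qed.

End Recursion.

Theorem theorem3p3 (d : nat) (lam : R) :
  (1 <= d)%nat -> 0 < lam < 1 ->
  exists c C : R, 0 < c /\ c <= C /\
    exists K : nat, forall k : nat, (K <= k)%nat ->
      c * (lam / INR d) ^ k <= vstar d lam k <= C * (lam / INR d) ^ k.
Proof.
  intros Hd Hlam.
  exists 1, (exp (lam / (1 - lam) ^ 2)).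
  split; [lra|]; split.
  { pose proof (exp_ineq1_le (lam / (1 - lam) ^ 2)).
    assert (0 <= lam / (1 - lam) ^ 2) by (apply Rle_mult_inv_pos; nra).
    lra. }
  exists 0%nat; intros k _.
  pose proof (vstar_ge_pow d lam Hd Hlam k).
  pose proof (vstar_le_exp_pow d lam Hd Hlam k).
  pose proof (pow_lt _ k (lam_div_d_pos d lam Hd Hlam)).
  pose proof (pow_between_0_1 lam k ltac:(lra)).
  assert (exp (lam * (1 - lam ^ k) / (1 - lam) ^ 2) <= exp (lam / (1 - lam) ^ 2)).
  { apply exp_le_compat, Rmult_le_compat_r; [apply Rlt_le, Rinv_0_lt_compat|]; nra. }
  split; nra.
Qed.
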